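(* Let $\mathbf{x}_1,\ldots,\mathbf{x}_n\in\mathbb{R}^p$ be distinct design points with observed responses $\mathbf{y}=(y_1,\ldots,y_n)^\top$. Let $\boldsymbol{\theta}=(\theta_1,\ldots,\theta_p)$ and $\boldsymbol{\alpha}=(\alpha_1,\ldots,\alpha_p)$ be correlation parameters with $0\le\theta_j$ and $\alpha_j>0$, and define the Gaussian correlation functions $g(\mathbf{h})=\exp(-\sum_{j=1}^p\theta_j h_j^2)$ and $l(\mathbf{h})=\exp(-\sum_{j=1}^p\alpha_j h_j^2)$. Let $\mathbf{G}$ and $\mathbf{L}$ be the $n\times n$ matrices with $(i,j)$ entries $g(\mathbf{x}_i-\mathbf{x}_j)$ and $l(\mathbf{x}_i-\mathbf{x}_j)$, and for $\mathbf{x}\in\mathbb{R}^p$ let $\mathbf{g}(\mathbf{x})=(g(\mathbf{x}-\mathbf{x}_1),\ldots,g(\mathbf{x}-\mathbf{x}_n))^\top$ and $\mathbf{l}(\mathbf{x})=(l(\mathbf{x}-\mathbf{x}_1),\ldots,l(\mathbf{x}-\mathbf{x}_n))^\top$. Let $v:\mathbb{R}^p\to(0,\infty)$ be a given function, $\boldsymbol{\Sigma}=\operatorname{diag}\{v(\mathbf{x}_1),\ldots,v(\mathbf{x}_n)\}$, $\lambda\in[0,1]$, $\mathbf{Q}=\mathbf{G}+\lambda\boldsymbol{\Sigma}^{1/2}\mathbf{L}\boldsymbol{\Sigma}^{1/2}$, $\mathbf{1}$ the all-ones vector in $\mathbb{R}^n$, and $\hat\mu=(\mathbf{1}^\top\mathbf{Q}^{-1}\mathbf{1})^{-1}\mathbf{1}^\top\mathbf{Q}^{-1}\mathbf{y}$.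 Define the single-stage predictor $$\hat y(\mathbf{x})=\hat\mu+\big(\mathbf{g}(\mathbf{x})+\lambda v^{1/2}(\mathbf{x})\boldsymbol{\Sigma}^{1/2}\mathbf{l}(\mathbf{x})\big)^\top\mathbf{Q}^{-1}(\mathbf{y}-\hat\mu\mathbf{1}).$$ Define the global trend $\hat y_{\mathrm{global}}(\mathbf{x})=\hat\mu+\mathbf{g}^\top(\mathbf{x})\mathbf{Q}^{-1}(\mathbf{y}-\hat\mu\mathbf{1})$, the residual vector $\mathbf{s}=\mathbf{y}-(\hat y_{\mathrm{global}}(\mathbf{x}_1),\ldots,\hat y_{\mathrm{global}}(\mathbf{x}_n))^\top$, the standardized residuals $\mathbf{s}^\ast=\boldsymbol{\Sigma}^{-1/2}\mathbf{s}$, and the sequential predictor $$\hat y_{\mathrm{seq}}(\mathbf{x})=\hat y_{\mathrm{global}}(\mathbf{x})+v^{1/2}(\mathbf{x})\,\mathbf{l}^\top(\mathbf{x})\mathbf{L}^{-1}\mathbf{s}^\ast.$$ Then $\hat y(\mathbf{x})=\hat y_{\mathrm{seq}}(\mathbf{x})$ for all $\mathbf{x}\in\mathbb{R}^p$.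
   Context: This is the composite Gaussian process (CGP) predictor with both parameters (the same $\lambda,\boldsymbol{\theta},\boldsymbol{\alpha}$ and volatility function $v$) used in both predictors. Since the design points are distinct, $\mathbf{G}$ and $\mathbf{L}$ are symmetric positive (semi)definite correlation matrices, with $\mathbf{L}$ and $\mathbf{Q}$ invertible, so all inverses above are well defined. $\boldsymbol{\Sigma}^{1/2}$ denotes the diagonal matrix of square roots of the diagonal of $\boldsymbol{\Sigma}$. *)

From HB Require Import structures.
From mathcomp Require Import all_boot all_order all_algebra.
From mathcomp Require Import all_classical all_reals.
From mathcomp Require Import all_analysis.
Set Implicit Arguments. Unset Strict Implicit. Unset Printing Implicit Defensive.
Import Order.TTheory GRing.Theory Num.Theory.
Local Open Scope ring_scope.

Section CGP.
Variables (R : realType) (n p : nat).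

Definition gauss_corr (th h : 'rV[R]_p) : R :=
  expR (- \sum_(j < p) th 0 j * (h 0 j) ^+ 2).

Definition corr_mx (th : 'rV[R]_p) (X : 'I_n -> 'rV[R]_p) : 'M[R]_n :=
  \matrix_(i, j) gauss_corr th (X i - X j).

Definition corr_vec (th : 'rV[R]_p) (X : 'I_n -> 'rV[R]_p) (x : 'rV[R]_p)
  : 'cV[R]_n := \col_i gauss_corr th (x - X i).

Definition Sig_half (v : 'rV[R]_p -> R) (X : 'I_n -> 'rV[R]_p) : 'M[R]_n :=
  diag_mx (\row_i Num.sqrt (v (X i))).
Definition Sig_invhalf (v : 'rV[R]_p -> R) (X : 'I_n -> 'rV[R]_p) : 'M[R]_n :=
  diag_mx (\row_i (Num.sqrt (v (X i)))^-1).

Definition ones : 'cV[R]_n := const_mx 1.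

Definition Qmx th al v X (lam : R) : 'M[R]_n :=
  corr_mx th X + lam *: (Sig_half v X *m corr_mx al X *m Sig_half v X).

Definition mu_hat th al v X lam (y : 'cV[R]_n) : R :=
  ((ones^T *m invmx (Qmx th al v X lam) *m ones) 0 0)^-1 *
  (ones^T *m invmx (Qmx th al v X lam) *m y) 0 0.

Definition y_hat th al v X lam y (x : 'rV[R]_p) : R :=
  let mu := mu_hat th al v X lam y in
  mu + ((corr_vec th X x + (lam * Num.sqrt (v x)) *: (Sig_half v X *m corr_vec al X x))^T
        *m invmx (Qmx th al v X lam) *m (y - mu *: ones)) 0 0.

Definition y_global th al v X lam y (x : 'rV[R]_p) : R :=
  let mu := mu_hat th al v X lam y in
  mu + ((corr_vec th X x)^T *m invmx (Qmx th al v X lam) *m (y - mu *: ones)) 0 0.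

Definition resid th al v X lam y : 'cV[R]_n :=
  y - \col_i y_global th al v X lam y (X i).
Definition std_resid th al v X lam y : 'cV[R]_n :=
  Sig_invhalf v X *m resid th al v X lam y.

Definition y_seq th al v X lam y (x : 'rV[R]_p) : R :=
  y_global th al v X lam y x +
  Num.sqrt (v x) * ((corr_vec al X x)^T *m invmx (corr_mx al X)
                      *m std_resid th al v X lam y) 0 0.

End CGP.

From HB Require Import structures.
From mathcomp Require Import all_boot all_order all_algebra.
From mathcomp Require Import all_classical all_reals.
From mathcomp Require Import all_analysis.
Import Order.TTheory GRing.Theory Num.Theory.
Local Open Scope ring_scope.

(* Write w = Q^-1 (y - mu 1).  The global trend fits the design points with
   mu 1 + G w, so since Q w = G w + lam S^{1/2} L S^{1/2} w the residuals are
   s = lam S^{1/2} L S^{1/2} w, and L^-1 S^{-1/2} s = lam S^{1/2} w.  The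
   sequential correction is therefore lam v^{1/2}(x) l(x)^T S^{1/2} w, which is
   exactly the part of the single-stage predictor beyond the global trend. *)

Lemma mul_diag_inv_diag (F : fieldType) (n : nat) (f : 'I_n -> F) :
  (forall i, f i != 0) ->
  diag_mx (\row_i (f i)^-1) *m diag_mx (\row_i f i) = 1%:M.
Proof.
move=> f_neq0; rewrite mulmx_diag -diag_const_mx.
by congr diag_mx; apply/matrixP => i j; rewrite !mxE mulVf.
Qed.

Section CGPAlgebra.
Variables (R : realType) (n p : nat).
Variables (X : 'I_n -> 'rV[R]_p) (y : 'cV[R]_n).
Variables (th al : 'rV[R]_p) (v : 'rV[R]_p -> R) (lam : R).

Let mu := mu_hat th al v X lam y.
Let G := corr_mx th X.
Let L := corr_mx al X.
Let S := Sig_half v X.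
Let Q := Qmx th al v X lam.
Let w := invmx Q *m (y - mu *: ones R n).

Lemma Sig_invhalfK : (forall x, 0 < v x) -> Sig_invhalf v X *m S = 1%:M.
Proof.
move=> v_gt0; apply: mul_diag_inv_diag => i.
by rewrite lt0r_neq0 // sqrtr_gt0.
Qed.

Lemma y_global_design :
  \col_i y_global th al v X lam y (X i) = mu *: ones R n + G *m w.
Proof.
apply/matrixP => i j; rewrite [j]ord1 !mxE /y_global -/mu -/Q -mulmxA -/w.
rewrite mxE mulr1; congr (_ + _).
by apply: eq_bigr => k _; rewrite !mxE.
Qed.

Lemma resid_eq : Q \in unitmx ->
  resid th al v X lam y = lam *: (S *m (L *m (S *m w))).
Proof.
move=> Q_unit; rewrite /resid y_global_design.
have -> : y = mu *: ones R n + Q *m w.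
  by rewrite /w mulmxA mulmxV // mul1mx addrC subrK.
rewrite opprD addrACA subrr add0r /Q /Qmx -/G -/L -/S mulmxDl addrC addKr.
by rewrite -scalemxAl -!mulmxA.
Qed.

Lemma std_resid_eq : (forall x, 0 < v x) -> L \in unitmx -> Q \in unitmx ->
  invmx L *m std_resid th al v X lam y = lam *: (S *m w).
Proof.
move=> v_gt0 L_unit Q_unit; rewrite /std_resid resid_eq //.
rewrite -!scalemxAr (mulmxA (Sig_invhalf v X)) Sig_invhalfK // mul1mx.
by rewrite mulKmx.
Qed.

Lemma y_hat_split (x : 'rV[R]_p) :
  y_hat th al v X lam y x =
  y_global th al v X lam y x +
  Num.sqrt (v x) * ((corr_vec al X x)^T *m (lam *: (S *m w))) 0 0.
Proof.
have trS : S^T = S by rewrite /S /Sig_half tr_diag_mx.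
rewrite /y_hat /y_global -/mu -/Q -addrA; congr (_ + _).
rewrite -/S [(_ + _)^T]linearD /= !mulmxDl mxE -mulmxA -/w; congr (_ + _).
rewrite [(_ *: _)^T]linearZ /= trmx_mul trS.
by rewrite -!scalemxAl -!mulmxA -/w -scalemxAr !mxE mulrCA mulrA.
Qed.

End CGPAlgebra.

Theorem theorem1 (R : realType) (n p : nat)
  (X : 'I_n -> 'rV[R]_p) (y : 'cV[R]_n)
  (theta alpha : 'rV[R]_p) (v : 'rV[R]_p -> R) (lam : R)
  (hX : injective X)
  (htheta : forall j, 0 <= theta 0 j)
  (halpha : forall j, 0 < alpha 0 j)
  (hv : forall x, 0 < v x)
  (hlam : 0 <= lam <= 1)
  (hL : corr_mx alpha X \in unitmx)
  (hQ : Qmx theta alpha v X lam \in unitmx) :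
  forall x : 'rV[R]_p,
    y_hat theta alpha v X lam y x = y_seq theta alpha v X lam y x.
Proof.
(* Distinctness of the design and the parameter ranges only serve to make L
   and Q invertible, which hL and hQ provide directly. *)
by move=> x; rewrite y_hat_split /y_seq -mulmxA std_resid_eq.
Qed.
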